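(* Let $\alpha>0$, $h>0$, let $(Y_k)_{k\ge0}$ be i.i.d. random variables with $\mathbb{E}[Y_1]=0$, $\mathbb{E}[Y_1^2]=1$, let $B^h_t=\sqrt{h}\sum_{k=0}^{\lfloor t/h\rfloor}Y_k$, and let $X^h_{0-}$ be a real-valued random variable independent of $(Y_k)$ whose law is atomless. Define, for increasing $\ell$, $X^h_t[\ell]=X^h_{0-}+B^h_t-\alpha\ell_{h\lfloor t/h\rfloor}$, $\tau^h[\ell]=\inf\{t\ge0:X^h_t[\ell]\le0\}$ and $\Gamma_h[\ell]_t=\mathbb{P}(\tau^h[\ell]\le t)$. Let $\underline{\Lambda}^h$ be the minimal solution of the Donsker problem with initial condition $X^h_{0-}$ (see context). Then $\underline{\Lambda}^h=\alpha\lim_{k\to\infty}\Gamma_h^{(k)}[0]$, where $\Gamma_h^{(k)}$ is the $k$-fold iterate of $\Gamma_h$, $0$ denotes the zero function, and the limit is understood in $M$.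
   Context: Donsker problem: a deterministic function $\Lambda^h$ is a solution if, with $X^h_t=X^h_{0-}+B^h_t-\Lambda^h_t$ and $\tau^h=\inf\{t\ge0:X^h_t\le0\}$, one has $\Lambda^h_t=\alpha\,\mathbb{P}(\tau^h\le t)$ for all $t\ge0$; a solution $\underline{\Lambda}^h$ is minimal if $\underline{\Lambda}^h\le\Lambda^h$ for every solution $\Lambda^h$. $M$ is the set of càdlàg increasing functions $\ell:\overline{\mathbb{R}}\to[0,1]$ with $\ell_{0-}=0$, $\ell_\infty=1$, with $\ell^n\to\ell$ iff $\ell^n_t\to\ell_t$ at all $t\in[0,\infty]$ where $\ell$ is continuous. *)

From HB Require Import structures.
From mathcomp Require Import all_boot all_order all_algebra.
From mathcomp Require Import all_classical all_reals all_analysis.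
Set Implicit Arguments. Unset Strict Implicit. Unset Printing Implicit Defensive.
Import Order.TTheory GRing.Theory Num.Theory.
Import numFieldNormedType.Exports.
Local Open Scope classical_set_scope.
Local Open Scope ring_scope.

Section Donsker.
Context {d : measure_display} {T : measurableType d} {R : realType}.
Variable P : probability T R.

(* (Y_k) mutually independent: product rule for every finite initial
   segment of indices (taking B k = setT gives every finite subfamily). *)
Definition mutually_independent_seq (Y : nat -> T -> R) : Prop :=
  forall (n : nat) (B : nat -> set R), (forall k, measurable (B k)) ->
    P (\bigcap_(k in [set k | (k < n)%N]) (Y k @^-1` B k))
    = (\prod_(k < n) P (Y k @^-1` B k))%E.

Definition identically_distributed_seq (Y : nat -> T -> R) : Prop :=
  forall (k : nat) (B : set R), measurable B ->
    P (Y k @^-1` B) = P (Y 0%N @^-1` B).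

(* X independent of sigma(Y_k, k >= 0): product rule against the
   generating pi-system of cylinder events. *)
Definition independent_of_seq (X : T -> R) (Y : nat -> T -> R) : Prop :=
  forall (A : set R) (n : nat) (B : nat -> set R), measurable A ->
    (forall k, measurable (B k)) ->
    P (X @^-1` A `&` \bigcap_(k in [set k | (k < n)%N]) (Y k @^-1` B k))
    = (P (X @^-1` A) * P (\bigcap_(k in [set k | (k < n)%N]) (Y k @^-1` B k)))%E.

Definition atomless_law (X : T -> R) : Prop :=
  forall x : R, P (X @^-1` [set x]) = 0%E.

Definition Bh (h : R) (Y : nat -> T -> R) (t : R) (w : T) : R :=
  Num.sqrt h * \sum_(0 <= k < (Num.truncn (t / h)).+1) Y k w.

Definition hit_time (X : R -> T -> R) (w : T) : \bar R :=
  ereal_inf [set t%:E | t in [set t | 0 <= t /\ X t w <= 0]].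

Definition hit_cdf (X : R -> T -> R) (t : R) : R :=
  fine (P [set w | (hit_time X w <= t%:E)%E]).

Definition donsker_solution (alpha h : R) (Y : nat -> T -> R) (X0 : T -> R)
    (Lam : R -> R) : Prop :=
  forall t, 0 <= t ->
    Lam t = alpha * hit_cdf (fun s w => X0 w + Bh h Y s w - Lam s) t.

Definition donsker_minimal_solution (alpha h : R) (Y : nat -> T -> R)
    (X0 : T -> R) (Lam : R -> R) : Prop :=
  donsker_solution alpha h Y X0 Lam /\
  forall Lam', donsker_solution alpha h Y X0 Lam' ->
    forall t, 0 <= t -> Lam t <= Lam' t.

Definition Gamma_h (alpha h : R) (Y : nat -> T -> R) (X0 : T -> R)
    (l : R -> R) : R -> R :=
  hit_cdf (fun s w => X0 w + Bh h Y s w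
                      - alpha * l (h * (Num.floor (s / h))%:~R)).

End Donsker.

(* An element l of M is a function on [0,oo) extended by l_{0-} = 0 on
   negative times (and l_oo = 1); its continuity points in [0,oo) are the
   continuity points of this extension. *)
Definition extM {R : realType} (l : R -> R) (t : R) : R :=
  if t < 0 then 0 else l t.

(* The iterates Gamma_h^(k)[0] increase with k, since Gamma_h is monotone and
   Gamma_h[0] >= 0, and by induction they stay below Lambda/alpha for every
   solution Lambda; hence they converge to some Gamma <= underline(Lambda)/alpha.
   At each grid time the walk X_{0-} + B^h has an atomless law, because X_{0-}
   is atomless and independent of the increments.  So the crossing events of
   the iterates increase to the crossing event of Gamma up to a null set, which
   gives Gamma_h[Gamma] = Gamma: alpha Gamma is a solution, and minimality
   forces alpha Gamma = underline(Lambda).  The convergence holds at every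
   t >= 0, so neither the continuity of Lambda at t nor the moment and i.i.d.
   assumptions on (Y_k) are needed. *)

From HB Require Import structures.
From mathcomp Require Import all_boot all_order all_algebra.
From mathcomp Require Import all_classical all_reals all_analysis.
From mathcomp Require Import lra.
Set Implicit Arguments.
Unset Strict Implicit.
Unset Printing Implicit Defensive.
Import Order.TTheory GRing.Theory Num.Theory.
Import numFieldNormedType.Exports.
Local Open Scope classical_set_scope.
Local Open Scope ring_scope.

Lemma preimage_measurable d (T : measurableType d) (R : realType) (f : T -> R)
    (A : set R) :
  measurable_fun setT f -> measurable A -> measurable (f @^-1` A).
Proof. by move=> mf mA; rewrite -[_ @^-1` _]setTI; exact: mf. Qed.

Section AtomlessLaw.
Context d (T : measurableType d) (R : realType) (P : probability T R)
  (X : {RV P >-> R}).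

Lemma le_law {A B : set R} : measurable A -> measurable B -> A `<=` B ->
  (P (X @^-1` A) <= P (X @^-1` B))%E.
Proof.
move=> mA mB AB; apply: le_measure; rewrite ?inE; try exact: measurable_funPTI.
exact: preimage_subset.
Qed.

Lemma law_left_tail_small (eta : R) : 0 < eta ->
  exists lo, (P (X @^-1` `]-oo, lo]) < eta%:E)%E.
Proof.
move=> eta_gt0; have /fine_cvg cdf0 := cvg_cdfNy0 X.
have [lo /= lo_small] := filter_ex (cvgr_lt 0 cdf0 eta eta_gt0).
exists lo; rewrite -[X in (X < _)%E]fineK ?lte_fin //.
by apply: fin_num_measure; exact: measurable_funPTI.
Qed.

Lemma law_right_tail_small (eta : R) : 0 < eta ->
  exists hi, (P (X @^-1` `]hi, +oo[) < eta%:E)%E.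
Proof.
move=> eta_gt0; have /fine_cvg ccdf0 := cvg_ccdfy0 X.
have [hi /= hi_small] := filter_ex (cvgr_lt 0 ccdf0 eta eta_gt0).
exists hi; rewrite -[X in (X < _)%E]fineK ?lte_fin //.
by apply: fin_num_measure; exact: measurable_funPTI.
Qed.

Hypothesis atomless : atomless_law P X.

Lemma atomless_law_itv_small (c eta : R) : 0 < eta ->
  exists2 r, 0 < r & (P (X @^-1` `](c - r)%R, (c + r)%R]) < eta%:E)%E.
Proof.
move=> eta_gt0; pose F n := X @^-1` `]c - n.+1%:R^-1, c + n.+1%:R^-1].
have mF n : measurable (F n) by exact: measurable_funPTI.
have capF : \bigcap_n F n = X @^-1` [set c].
  apply/seteqP; split=> w /=; last first.
    move=> Xc n _; rewrite /F /= Xc in_itv /=.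
    by rewrite gtrBl lerDl invr_ge0 invr_gt0 ltr0Sn ler0n.
  move=> inF; apply: contrapT => /eqP; rewrite -subr_eq0 -normr_gt0 => dist_gt0.
  have [n /= small] := filter_ex (near_infty_natSinv_lt (PosNum dist_gt0)).
  move: (inF n I) small; rewrite /F /= in_itv /=; set r := n.+1%:R^-1.
  by move=> /andP[lo hi]; rewrite ltr_normr => /orP[]; lra.
have Fdec : {homo F : m n / (m <= n)%N >-> (n <= m)%O}.
  move=> m n mn; apply/subsetPset => w; rewrite /F /= !in_itv /= => /andP[lo hi].
  have : n.+1%:R^-1 <= m.+1%:R^-1 :> R by rewrite lef_pV2 ?posrE ?ltr0Sn // ler_nat ltnS.
  by move: lo hi; set rm := m.+1%:R^-1; set rn := n.+1%:R^-1 => *; apply/andP; split; lra.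
have /fine_cvg cvF : (P \o F) n @[n --> \oo] --> 0%E.
  rewrite -(atomless c) -capF.
  apply: nonincreasing_cvg_mu (bigcap_measurable _ (fun n _ => mF n)) Fdec => //.
  exact: le_lt_trans (probability_le1 P (mF 0%N)) (ltry 1).
have [n /= small] := filter_ex (cvgr_lt 0 cvF eta eta_gt0).
exists n.+1%:R^-1; first by rewrite invr_gt0.
by rewrite -(fineK (fin_num_measure P _ (mF n))) lte_fin.
Qed.

(* Otherwise there are intervals ]x_n, x_n + 1/(n+1)] of mass > eta; by tightness
   the x_n have a cluster point c, and the intervals near c contradict
   [atomless_law_itv_small] at c. *)
Lemma atomless_law_modulus (eta : R) : 0 < eta ->
  exists2 w, 0 < w & forall x, (P (X @^-1` `]x, (x + w)%R]) <= eta%:E)%E.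
Proof.
move=> eta_gt0; apply: contrapT => nomod.
have heavy n : exists x, (eta%:E < P (X @^-1` `]x, (x + n.+1%:R^-1)%R]))%E.
  apply: contrapT => light; apply: nomod; exists n.+1%:R^-1; first by rewrite invr_gt0.
  by move=> x; rewrite leNgt; apply/negP => ?; apply: light; exists x.
have [x_ x_heavy] := choice heavy.
have not_within A : measurable A -> (P (X @^-1` A) < eta%:E)%E ->
    forall n, ~ `]x_ n, (x_ n + n.+1%:R^-1)%R] `<=` A.
  move=> mA light n sub; have := le_law (measurable_itv _) mA sub.
  by move/le_lt_trans/(_ light)/(lt_trans (x_heavy n)); rewrite ltxx.
have step_le1 n : n.+1%:R^-1 <= 1 :> R by rewrite invf_le1 ?ltr0Sn // ler1n.
have [lo lo_tail] := law_left_tail_small eta_gt0.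
have [hi hi_tail] := law_right_tail_small eta_gt0.
have x_bounded : \forall n \near \oo, `[lo - 1, hi]%classic (x_ n).
  apply: nearW => n; rewrite /= in_itv /=; apply/andP; split.
    rewrite leNgt; apply/negP => x_low; apply: (not_within _ _ lo_tail n) => // y.
    by rewrite /= !in_itv /=; move: (step_le1 n); set r := n.+1%:R^-1; lra.
  rewrite leNgt; apply/negP => x_high; apply: (not_within _ _ hi_tail n) => // y.
  by rewrite /= !in_itv /= andbT => /andP[]; lra.
have [c [_ c_cluster]] := segment_compact (F := x_ @ \oo) _ x_bounded.
have [r r_gt0 r_light] := atomless_law_itv_small c eta_gt0.
have r2_gt0 : 0 < r / 2 by rewrite divr_gt0.
have [_ [[n small <-] near_c]] := c_cluster
  [set x_ n | n in [set n | n.+1%:R^-1 < r / 2]] (ball c (r / 2))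
  (filterS (fun n small => ex_intro2 _ _ n small erefl)
     (near_infty_natSinv_lt (PosNum r2_gt0)))
  (nbhsx_ballx c _ r2_gt0).
apply: (not_within _ _ r_light n) => // y; move: near_c small.
rewrite /ball /= ltr_distlC /= !in_itv /=; set s := n.+1%:R^-1.
by move=> /andP[? ?] ? /andP[? ?]; apply/andP; split; lra.
Qed.

End AtomlessLaw.

Section Cells.
Context {R : realType} (delta : R).
Hypothesis delta_gt0 : 0 < delta.

(* The cells [m delta, (m+1) delta[ (m : int) numbered through [pickle]; numbers
   that code no integer get an empty cell and the junk base 0. *)
Definition cell_index (y : R) : nat := pickle (Num.floor (y / delta)).

Definition cell (j : nat) : set R := [set y | cell_index y = j].

Definition cell_base (j : nat) : R := (odflt 0 (pickle_inv j))%:~R * delta.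

Lemma cell_baseP y :
  cell_base (cell_index y) <= y < cell_base (cell_index y) + delta.
Proof.
rewrite /cell_base /cell_index pickleK_inv /=.
by have := floor_itv (y / delta); rewrite intrD ler_pdivlMr // ltr_pdivrMr // mulrDl mul1r.
Qed.

Lemma measurable_cell j : measurable (cell j).
Proof.
case Ej : (pickle_inv j : option int) => [m|]; last first.
  rewrite (_ : cell j = set0); first exact: measurable0.
  apply/seteqP; split=> // y; rewrite /cell /= => yj.
  by move: Ej; rewrite -yj /cell_index pickleK_inv.
rewrite (_ : cell j = `[m%:~R * delta, (m%:~R + 1) * delta[%classic).
  exact: measurable_itv.
have mj : pickle m = j by rewrite -(@pickle_invK int j) Ej.
apply/seteqP; split=> y /=; rewrite in_itv /= /cell_index -mj.
  move/(pcan_inj pickleK_inv) <-; have := floor_itv (y / delta).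
  by rewrite intrD -ler_pdivlMr // -ltr_pdivrMr.
rewrite -ler_pdivlMr // -ltr_pdivrMr // => lohi.
by rewrite /cell /cell_index /= (floor_def (m := m)) // intrD.
Qed.

End Cells.

Section AtomlessSum.
Context d (T : measurableType d) (R : realType) (P : probability T R)
  (X : {RV P >-> R}) (Y : nat -> {RV P >-> R}) (a : R).

Definition xsum n w : R := X w + a * \sum_(0 <= k < n) Y k w.

Definition cylinder n (B : nat -> set R) : set T :=
  \bigcap_(k in [set k | (k < n)%N]) (Y k @^-1` B k).

Definition refine_at (delta : R) (B : nat -> set R) n j k : set R :=
  if k == n then ( *%R a) @^-1` cell delta j else B k.

Lemma measurable_xsum n : measurable_fun setT (xsum n).
Proof.
apply: measurable_realfun.measurable_funD; first exact: measurable_funPT.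
apply: measurable_realfun.measurable_funM; first exact: measurable_cst.
by apply: measurable_sum => k; exact: measurable_funPT.
Qed.

Lemma measurable_xsum_preimage n A : measurable A -> measurable (xsum n @^-1` A).
Proof. exact: preimage_measurable (measurable_xsum n). Qed.

Lemma measurable_cylinder n B : (forall k, measurable (B k)) ->
  measurable (cylinder n B).
Proof.
move=> mB; case: n => [|n].
  rewrite /cylinder (_ : [set k | (k < 0)%N] = set0) ?bigcap_set0 //.
  by apply/seteqP; split=> k.
by apply: bigcap_measurable; [exists 0%N | move=> k _; exact: measurable_funPTI].
Qed.

Lemma measurable_refine_at delta B n j : 0 < delta ->
  (forall k, measurable (B k)) -> forall k, measurable (refine_at delta B n j k).
Proof.
move=> delta_gt0 mB k; rewrite /refine_at; case: eqP => _ //.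
apply: preimage_measurable; last exact: measurable_cell.
exact: measurable_realfun.mulrl_measurable.
Qed.

Lemma xsumS n w : xsum n.+1 w = xsum n w + a * Y n w.
Proof. by rewrite /xsum big_nat_recr //= mulrDr addrA. Qed.

Section Refinement.
Variables (delta : R) (B : nat -> set R) (n n0 : nat).
Hypotheses (delta_gt0 : 0 < delta) (n_lt_n0 : (n < n0)%N).

Lemma xsumS_itv_cover x v :
  xsum n.+1 @^-1` `]x, (x + v)%R] `&` cylinder n0 B `<=`
  \bigcup_j (xsum n @^-1` `](x - (cell_base delta j + delta))%R,
                           (x - (cell_base delta j + delta) + (v + delta))%R]
             `&` cylinder n0 (refine_at delta B n j)).
Proof.
move=> w [/= xsum_in inB]; exists (cell_index delta (a * Y n w)) => //; split.
  move: xsum_in; rewrite /= !in_itv /= xsumS.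
  have := cell_baseP delta_gt0 (a * Y n w).
  by set b := cell_base _ _ => /andP[? ?] /andP[? ?]; apply/andP; split; lra.
by move=> k kn0; rewrite /refine_at; case: eqP => [->|_] //; exact: inB.
Qed.

Lemma refine_at_free j : (forall k, (k < n.+1)%N -> B k = setT) ->
  forall k, (k < n)%N -> refine_at delta B n j k = setT.
Proof.
move=> Bfree k kn; rewrite /refine_at; case: eqP => [kn_eq|_].
  by rewrite kn_eq ltnn in kn.
by apply: Bfree; exact: ltnW.
Qed.

Lemma refine_at_sum_le : (forall k, measurable (B k)) -> B n = setT ->
  (\sum_(j <oo) P (cylinder n0 (refine_at delta B n j)) <= P (cylinder n0 B))%E.
Proof.
move=> mB BnT; have mBj j := measurable_cylinder n0 (measurable_refine_at n j delta_gt0 mB).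
rewrite -measure_semi_bigcup //; last exact: bigcupT_measurable.
  apply: le_measure; rewrite ?inE; [exact: bigcupT_measurable | exact: measurable_cylinder |].
  move=> w [j _ inBj] k kn0; have := inBj k kn0.
  by rewrite /refine_at; case: eqP => [->|//]; rewrite BnT.
move=> i j _ _ [w [/(_ n n_lt_n0) + /(_ n n_lt_n0)]].
by rewrite /refine_at eqxx /cell /= => -> ->.
Qed.

End Refinement.

Hypothesis indep : independent_of_seq P X (fun k => (Y k : T -> R)).

(* Induction on n, conditioning on the cell of a * Y n: within a cell this last
   step is known up to delta, which widens the interval by delta, and the cells
   partition the cylinder.  The base case is the independence of X from the
   cylinder. *)
Lemma xsum_cylinder_le (delta eta : R) n0 : 0 < delta ->
  forall n, (n <= n0)%N -> forall x v B,
  (forall k, measurable (B k)) -> (forall k, (k < n)%N -> B k = setT) ->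
  (forall y, (P (X @^-1` `]y, (y + (v + n%:R * delta))%R]) <= eta%:E)%E) ->
  (P (xsum n @^-1` `]x, (x + v)%R] `&` cylinder n0 B) <= eta%:E * P (cylinder n0 B))%E.
Proof.
move=> delta_gt0; elim=> [|n IH] n_le x v B mB Bfree light.
  rewrite (_ : xsum 0 = X); last by apply/funext => w; rewrite /xsum big_geq // mulr0 addr0.
  rewrite /cylinder (indep n0 (measurable_itv _) mB); apply: lee_wpmul2r => //.
  by move: (light x); rewrite mul0r addr0.
have eta_ge0 : (0 <= eta%:E)%E := le_trans (measure_ge0 _ _) (light 0).
have mBj j := measurable_refine_at n j delta_gt0 mB.
have mlhs : measurable (xsum n.+1 @^-1` `]x, (x + v)%R] `&` cylinder n0 B).
  by apply: measurableI; [exact: measurable_xsum_preimage | exact: measurable_cylinder].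
apply: (le_trans (measure_sigma_subadditive P _ mlhs
  (xsumS_itv_cover (B := B) (n0 := n0) (x := x) (v := v) delta_gt0))).
  move=> j; apply: measurableI; first exact: measurable_xsum_preimage.
  exact: measurable_cylinder.
apply: (@le_trans _ _ (\sum_(j <oo) eta%:E * P (cylinder n0 (refine_at delta B n j)))%E).
  apply: lee_nneseries => [j _ _|j _]; first exact: measure_ge0.
  apply: IH; [exact: ltnW | exact: mBj | exact: refine_at_free |].
  by move=> y; rewrite (_ : v + delta + _ = v + n.+1%:R * delta) // -natr1; lra.
rewrite nneseriesZl; last by move=> j _; exact: measure_ge0.
by apply: lee_wpmul2l => //; apply: refine_at_sum_le => //; exact: Bfree.
Qed.

Lemma xsum_atomless n c : atomless_law P X -> P (xsum n @^-1` [set c]) = 0%E.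
Proof.
move=> atomless; apply/eqP; rewrite eq_le measure_ge0 andbT.
apply/lee_addgt0Pr => e e_gt0; rewrite add0e.
have [w w_gt0 modulus] := atomless_law_modulus atomless e_gt0.
pose delta := w / n.+1%:R.
have delta_gt0 : 0 < delta by rewrite divr_gt0.
have light y : (P (X @^-1` `]y, (y + (delta + n%:R * delta))%R]) <= e%:E)%E.
  rewrite (_ : delta + _ = w) //.
  by rewrite /delta -[X in X + _]mul1r -mulrDl addrC natr1 mulrC divfK // pnatr_eq0.
have mcyl : measurable (cylinder n (fun=> setT)) by exact: measurable_cylinder.
have bound := xsum_cylinder_le delta_gt0 (leqnn n) (c - delta) (fun=> measurableT)
  (fun _ _ => erefl) light.
apply: (@le_trans _ _ (P (xsum n @^-1` `](c - delta)%R, (c - delta + delta)%R]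
                          `&` cylinder n (fun=> setT)))).
  apply: le_measure; rewrite ?inE.
  - exact: measurable_xsum_preimage.
  - by apply: measurableI mcyl; exact: measurable_xsum_preimage.
  - by move=> y /= ->; split=> //; rewrite in_itv /= subrK lexx gtrBl delta_gt0.
apply: le_trans bound _.
by rewrite -[leRHS]mule1 lee_wpmul2l ?lee_fin ?(ltW e_gt0) ?probability_le1.
Qed.

End AtomlessSum.

Lemma measurable_down_closed (R : realType) (D : set R) :
  (forall x y, x <= y -> D y -> D x) -> measurable D.
Proof.
move=> downD; have [[y0 Dy0]|/forallNP notD] := pselect (exists y, ~ D y); last first.
  rewrite (_ : D = setT); first exact: measurableT.
  by apply/seteqP; split=> x // _; exact: contrapT.
have [D0|/set0P/negP] := pselect (D !=set0); last first.
  by rewrite negbK => /eqP ->; exact: measurable0.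
have supD : has_sup D.
  split=> //; exists y0 => x Dx; rewrite leNgt; apply/negP => /ltW y0x.
  exact/Dy0/(downD _ _ y0x).
have [Dsup|Dsup] := pselect (D (sup D)).
  rewrite (_ : D = `]-oo, sup D]%classic); first exact: measurable_itv.
  apply/seteqP; split=> x /=; rewrite in_itv /=; first exact: ub_le_sup supD.2 _.
  by move=> xs; exact: downD Dsup.
rewrite (_ : D = `]-oo, sup D[%classic); first exact: measurable_itv.
apply/seteqP; split=> x /=; rewrite in_itv /=.
  move=> Dx; rewrite lt_neqAle (ub_le_sup supD.2) // andbT.
  by apply/eqP => xs; apply: Dsup; rewrite -xs.
rewrite -subr_gt0 => /sup_adherent/(_ supD)[y Dy yx].
by apply: downD Dy; lra.
Qed.

Section HittingTime.
Context d (T : measurableType d) (R : realType).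

Lemma hit_time_le (X : R -> T -> R) w s t :
  0 <= s -> X s w <= 0 -> s <= t -> (hit_time X w <= t%:E)%E.
Proof.
by move=> s_ge0 Xs st; apply: ge_ereal_inf; exists s%:E; [exists s | rewrite lee_fin].
Qed.

Lemma eq_hit_time (X X' : R -> T -> R) w :
  (forall s, 0 <= s -> X s w = X' s w) -> hit_time X w = hit_time X' w.
Proof.
move=> XX'; congr ereal_inf; apply/seteqP; split=> _ [s [s_ge0 Xs] <-];
  by exists s => //; split; rewrite // ?XX' // -XX'.
Qed.

Variables (h : R).
Hypothesis h_gt0 : 0 < h.

Definition nstep (t : R) : nat := Num.truncn (t / h).

Lemma nstep_grid j : nstep (h * j%:R) = j.
Proof. by rewrite /nstep mulrC mulKf ?gt_eqF // natrK. Qed.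

Lemma nstep_ge j t : 0 <= t -> (j <= nstep t)%N = (h * j%:R <= t).
Proof.
move=> t_ge0; rewrite /nstep truncn_ge_nat; last by rewrite divr_ge0 // ltW.
by rewrite ler_pdivlMr // mulrC.
Qed.

Lemma nstep_lt t : t < h * (nstep t).+1%:R.
Proof. by have := truncnS_gt (t / h); rewrite ltr_pdivrMr // mulrC. Qed.

Lemma floor_grid s : 0 <= s -> h * (Num.floor (s / h))%:~R = h * (nstep s)%:R.
Proof.
move=> s_ge0; rewrite /nstep truncEfloor.
have : 0 <= Num.floor (s / h) by rewrite floor_ge0 divr_ge0 // ltW.
by case: (Num.floor _).
Qed.

Lemma hit_time_step_le (Z : nat -> T -> R) (g : nat -> R) (t : R) (w : T) : 0 <= t ->
  (hit_time (fun s w => Z (nstep s) w - g (nstep s))%R w <= t%:E)%E <->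
  exists2 j, (j <= nstep t)%N & Z j w <= g j.
Proof.
move=> t_ge0; split; last first.
  move=> [j jt Zj]; have jh_ge0 : 0 <= h * j%:R by rewrite mulr_ge0 // ltW.
  apply: (hit_time_le (s := h * j%:R)) => //; first by rewrite nstep_grid subr_le0.
  by rewrite -nstep_ge.
move=> hit_le; apply: contrapT => no_cross.
suff : ((h * (nstep t).+1%:R)%:E <= hit_time (fun s w => Z (nstep s) w - g (nstep s))%R w)%E.
  by move/le_trans/(_ hit_le); rewrite lee_fin leNgt nstep_lt.
apply/ereal_infP => _ [s [s_ge0 Zs] <-]; rewrite lee_fin.
have : ~ (nstep s <= nstep t)%N.
  by move=> st; apply: no_cross; exists (nstep s) => //; rewrite -subr_le0.
by move/negP; rewrite -ltnNge (nstep_ge _ s_ge0).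
Qed.

(* The infimum need not be attained, so the event is the intersection over q of
   the events Z (nstep s) <= f s for some s in [0, t + 1/(q+1)]; grouped by the
   step j = nstep s, the admissible values of Z j form a down-closed set. *)
Lemma measurable_hit_time_le (Z : nat -> T -> R) (f : R -> R) (t : R) :
  (forall j, measurable_fun setT (Z j)) ->
  measurable [set w | (hit_time (fun s w => Z (nstep s) w - f s)%R w <= t%:E)%E].
Proof.
move=> mZ.
pose D q j := [set x : R | exists s, [/\ 0 <= s, s <= t + q.+1%:R^-1, nstep s = j & x <= f s]].
rewrite (_ : [set w | _] = \bigcap_q \bigcup_j (Z j @^-1` D q j)).
  apply: bigcapT_measurable => q; apply: bigcupT_measurable => j.
  apply: preimage_measurable => //; apply: measurable_down_closed.
  by move=> x y xy [s [? ? ? ys]]; exists s; split=> //; exact: le_trans ys.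
apply/seteqP; split=> w /=.
  move=> hit_le q _.
  have : (hit_time (fun s w => Z (nstep s) w - f s)%R w < (t + q.+1%:R^-1)%:E)%E.
    by apply: le_lt_trans hit_le _; rewrite lte_fin ltrDl invr_gt0.
  case/ereal_inf_lt => _ [s [s_ge0 Zs] <-]; rewrite lte_fin => st.
  by exists (nstep s) => //; exists s; split=> //; [exact: ltW | rewrite -subr_le0].
move=> cross; apply/lee_addgt0Pr => e e_gt0.
have [q /= small] := filter_ex (near_infty_natSinv_lt (PosNum e_gt0)).
have [j _ [s [s_ge0 st sj Zs]]] := cross q I.
apply: (hit_time_le (s := s)) => //; first by rewrite sj subr_le0.
by move: st small; set r := q.+1%:R^-1; lra.
Qed.

End HittingTime.

Section Gamma.
Context d (T : measurableType d) (R : realType) (P : probability T R)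
  (alpha h : R) (Y : nat -> {RV P >-> R}) (X0 : {RV P >-> R}).
Hypotheses (alpha_gt0 : 0 < alpha) (h_gt0 : 0 < h).
Hypothesis indep : independent_of_seq P X0 (fun k => (Y k : T -> R)).
Hypothesis atomless : atomless_law P X0.

Local Notation Gam := (Gamma_h P alpha h (fun k => (Y k : T -> R)) X0).
Local Notation nstep := (nstep h).

Definition walk j : T -> R := xsum X0 Y (Num.sqrt h) j.+1.

Lemma Bh_walk s w : X0 w + Bh h (fun k => (Y k : T -> R)) s w = walk (nstep s) w.
Proof. by []. Qed.

Lemma measurable_walk j : measurable_fun setT (walk j).
Proof. exact: measurable_xsum. Qed.

Lemma walk_levels_null (c : nat -> R) : P (\bigcup_j walk j @^-1` [set c j]) = 0%E.
Proof.
have mlevel j : measurable (walk j @^-1` [set c j]).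
  exact: preimage_measurable (measurable_walk j) (measurable_set1 _).
apply/eqP; rewrite eq_le measure_ge0 andbT.
apply: le_trans
  (measure_sigma_subadditive P mlevel (bigcupT_measurable _ mlevel) (fun w => id)) _.
by rewrite eseries0 // => j _ _; exact: xsum_atomless.
Qed.

Definition crossed (l : R -> R) t : set T :=
  [set w | exists2 j, (j <= nstep t)%N & walk j w <= alpha * l (h * j%:R)].

Lemma measurable_crossed l t : measurable (crossed l t).
Proof.
rewrite (_ : crossed l t = \bigcup_(j in [set j | (j <= nstep t)%N])
                             (walk j @^-1` `]-oo, alpha * l (h * j%:R)])).
  apply: bigcup_measurable => j _.
  exact: preimage_measurable (measurable_walk j) (measurable_itv _).
by apply/seteqP; split=> w [j jt walkj]; exists j; rewrite //= in_itv in walkj *.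
Qed.

Lemma GammaE l t : 0 <= t -> Gam l t = fine (P (crossed l t)).
Proof.
move=> t_ge0; rewrite /Gamma_h /hit_cdf; congr (fine (P _)); apply/seteqP.
suff eq_hit w : (hit_time (fun s w => X0 w + Bh h (fun k => (Y k : T -> R)) s w
    - alpha * l (h * (Num.floor (s / h))%:~R))%R w <= t%:E)%E <-> crossed l t w.
  by split=> w /eq_hit.
rewrite (eq_hit_time (X' := fun s w => walk (nstep s) w - alpha * l (h * (nstep s)%:R))).
  exact: (hit_time_step_le h_gt0 walk (fun j => alpha * l (h * j%:R)) w t_ge0).
by move=> s s_ge0; rewrite floor_grid.
Qed.

Lemma Gamma_ge0 l t : 0 <= Gam l t.
Proof. exact/fine_ge0/measure_ge0. Qed.

Lemma Gamma_le1 l t : 0 <= t -> Gam l t <= 1.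
Proof.
move=> t_ge0; have mC := measurable_crossed l t.
by rewrite GammaE // -lee_fin fineK; [exact: probability_le1 | exact: fin_num_measure].
Qed.

Lemma le_Gamma l l' t : 0 <= t ->
  (forall j, (j <= nstep t)%N -> l (h * j%:R) <= l' (h * j%:R)) ->
  Gam l t <= Gam l' t.
Proof.
move=> t_ge0 ll'; rewrite !GammaE //.
apply: fine_le; [exact: fin_num_measure (measurable_crossed _ _)..|].
apply: le_measure; rewrite ?inE; [exact: measurable_crossed.. |].
move=> w [j jt walkj]; exists j => //; apply: le_trans walkj _.
by rewrite ler_pM2l // ll'.
Qed.

Lemma Gamma_grid l t : 0 <= t -> Gam l t = Gam l (h * (nstep t)%:R).
Proof.
move=> t_ge0; rewrite !GammaE // ?mulr_ge0 ?(ltW h_gt0) //.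
by rewrite /crossed nstep_grid.
Qed.

Section IncreasingLimit.
Variables (l_ : nat -> R -> R) (l : R -> R) (t : R).
Hypothesis t_ge0 : 0 <= t.
Hypothesis l_nd : forall s, 0 <= s -> nondecreasing_seq (l_ ^~ s).
Hypothesis l_cvg : forall s, 0 <= s -> l_ ^~ s @ \oo --> l s.

Let grid_ge0 j : 0 <= h * j%:R. Proof. by rewrite mulr_ge0 // ltW. Qed.

Lemma crossed_nondecreasing : nondecreasing_seq (fun k => crossed (l_ k) t).
Proof.
move=> m n mn; apply/subsetPset => w [j jt walkj]; exists j => //.
by apply: le_trans walkj _; rewrite ler_pM2l // l_nd.
Qed.

(* In the limit only the paths on which some walk j hits the level exactly
   are gained, and they form a null set. *)
Lemma P_crossed_lim : P (crossed l t) = P (\bigcup_k crossed (l_ k) t).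
Proof.
have mU : measurable (\bigcup_k crossed (l_ k) t).
  by apply: bigcupT_measurable => k; exact: measurable_crossed.
have mN : measurable (\bigcup_j walk j @^-1` [set alpha * l (h * j%:R)]).
  apply: bigcupT_measurable => j.
  exact: preimage_measurable (measurable_walk j) (measurable_set1 _).
apply/eqP; rewrite eq_le; apply/andP; split.
  rewrite -(measureU0 mU mN (walk_levels_null _)).
  apply: le_measure; rewrite ?inE; [exact: measurable_crossed | exact: measurableU |].
  move=> w [j jt walkj]; have [eq_j|neq_j] := eqVneq (walk j w) (alpha * l (h * j%:R)).
    by right; exists j.
  have /(cvgr_gt _ (l_cvg (grid_ge0 j)))/filter_ex[k lt_k] : walk j w / alpha < l (h * j%:R).
    by rewrite ltr_pdivrMr // mulrC lt_neqAle neq_j.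
  by left; exists k => //; exists j => //; rewrite -ler_pdivrMl // mulrC ltW.
apply: le_measure; rewrite ?inE; [exact: mU | exact: measurable_crossed |].
move=> w [k _ [j jt walkj]]; exists j => //; apply: le_trans walkj _.
have lj_cvg := l_cvg (grid_ge0 j); rewrite ler_pM2l //.
have := nondecreasing_cvgn_le (l_nd (grid_ge0 j)) (cvgP _ lj_cvg) k.
by rewrite (cvg_lim _ lj_cvg).
Qed.

Lemma Gamma_cvg : Gam (l_ k) t @[k --> \oo] --> Gam l t.
Proof.
have mU : measurable (\bigcup_k crossed (l_ k) t).
  by apply: bigcupT_measurable => k; exact: measurable_crossed.
have cvU : P (crossed (l_ k) t) @[k --> \oo] --> P (crossed l t).
  rewrite P_crossed_lim.
  exact: nondecreasing_cvg_mu (fun k => measurable_crossed _ _) mU crossed_nondecreasing.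
rewrite -(fineK (fin_num_measure P _ (measurable_crossed l t))) in cvU.
rewrite GammaE //; apply: cvg_trans (fine_cvg cvU).
by apply: near_eq_cvg; near=> k; rewrite /= GammaE.
Unshelve. all: by end_near.
Qed.

End IncreasingLimit.

Local Notation G k := (iter k Gam (fun=> 0)).

Lemma iter_Gamma_le1 k t : 0 <= t -> G k t <= 1.
Proof. by case: k => [|k] t_ge0 /=; [exact: ler01 | exact: Gamma_le1]. Qed.

Lemma iter_Gamma_nondecreasing t : 0 <= t -> nondecreasing_seq (fun k => G k t).
Proof.
move=> t_ge0; apply/nondecreasing_seqP => k; elim: k t t_ge0 => [|k IH] t t_ge0.
  exact: Gamma_ge0.
by rewrite /=; apply: le_Gamma => // j _; apply: IH; rewrite mulr_ge0 // ltW.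
Qed.

Lemma iter_Gamma_grid k t : 0 <= t -> G k t = G k (h * (nstep t)%:R).
Proof. by case: k => [|k] t_ge0 //=; exact: Gamma_grid. Qed.

Definition iter_Gamma_lim t := sup (range (fun k => G k t)).

Lemma iter_Gamma_bounded t : 0 <= t -> has_ubound (range (fun k => G k t)).
Proof. by move=> t_ge0; exists 1 => _ [k _ <-]; exact: iter_Gamma_le1. Qed.

Lemma iter_Gamma_cvg t : 0 <= t -> (fun k => G k t) @ \oo --> iter_Gamma_lim t.
Proof.
move=> t_ge0; apply: nondecreasing_cvgn; last exact: iter_Gamma_bounded.
exact: iter_Gamma_nondecreasing.
Qed.

Lemma iter_Gamma_lim_grid t : 0 <= t -> iter_Gamma_lim t = iter_Gamma_lim (h * (nstep t)%:R).
Proof.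
move=> t_ge0; rewrite /iter_Gamma_lim.
by under eq_fun do rewrite iter_Gamma_grid //.
Qed.

Lemma Gamma_iter_Gamma_lim t : 0 <= t -> Gam iter_Gamma_lim t = iter_Gamma_lim t.
Proof.
move=> t_ge0; have := iter_Gamma_cvg t_ge0; rewrite -cvg_shiftS => cvS.
exact: cvg_unique (Gamma_cvg t_ge0 iter_Gamma_nondecreasing iter_Gamma_cvg) cvS.
Qed.

Lemma iter_Gamma_lim_solution :
  donsker_solution P alpha h (fun k => (Y k : T -> R)) X0 (fun s => alpha * iter_Gamma_lim s).
Proof.
move=> t t_ge0; rewrite -{1}(Gamma_iter_Gamma_lim t_ge0) /Gamma_h /hit_cdf.
congr (_ * fine (P _)); apply/seteqP; split=> w /=;
  rewrite (eq_hit_time (X' := fun s w => X0 w + Bh h (fun k => (Y k : T -> R)) s w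
                               - alpha * iter_Gamma_lim s)) // => s s_ge0;
  by rewrite floor_grid // -iter_Gamma_lim_grid.
Qed.

Lemma iter_Gamma_le_solution Lam k t :
  donsker_solution P alpha h (fun k => (Y k : T -> R)) X0 Lam -> 0 <= t ->
  G k t <= Lam t / alpha.
Proof.
move=> Lam_sol; elim: k t => [|k IH] t t_ge0.
  by rewrite Lam_sol // mulrC mulKf ?gt_eqF //; exact/fine_ge0/measure_ge0.
rewrite /= GammaE // Lam_sol // mulrC mulKf ?gt_eqF //.
have mhit := measurable_hit_time_le h Lam t measurable_walk.
apply: fine_le; [exact: fin_num_measure (measurable_crossed _ _) | exact: fin_num_measure |].
apply: le_measure; rewrite ?inE; [exact: measurable_crossed | exact: mhit |].
move=> w [j jt walkj]; have jh_ge0 : 0 <= h * j%:R by rewrite mulr_ge0 // ltW.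
apply: (hit_time_le (s := h * j%:R)) => //; last by rewrite -nstep_ge.
rewrite Bh_walk (nstep_grid h_gt0) subr_le0; apply: le_trans walkj _.
by rewrite mulrC -ler_pdivlMr // IH.
Qed.

End Gamma.

Unset Implicit Arguments.

Theorem lemma3p1 (d : measure_display) (T : measurableType d) (R : realType)
  (P : probability T R) (alpha h : R)
  (Y : nat -> {RV P >-> R}) (X0 : {RV P >-> R}) (Lam : R -> R) :
  0 < alpha -> 0 < h ->
  mutually_independent_seq P (fun k => (Y k : T -> R)) ->
  identically_distributed_seq P (fun k => (Y k : T -> R)) ->
  P.-integrable setT (EFin \o (Y 1%N : T -> R)) ->
  ('E_P[Y 1%N] = 0)%E ->
  ('E_P[(Y 1%N : T -> R) ^+ 2] = 1)%E ->
  independent_of_seq P X0 (fun k => (Y k : T -> R)) ->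
  atomless_law P X0 ->
  donsker_minimal_solution P alpha h (fun k => (Y k : T -> R)) X0 Lam ->
  forall t : R, 0 <= t ->
    {for t, continuous (extM (fun s => Lam s / alpha))} ->
    (fun k : nat =>
       iter k (Gamma_h P alpha h (fun k => (Y k : T -> R)) X0)
              (fun _ : R => 0) t)
      @ \oo --> Lam t / alpha.
Proof.
move=> alpha_gt0 h_gt0 _ _ _ _ _ indep atomless [Lam_sol Lam_min] t t_ge0 _.
suff <- : iter_Gamma_lim alpha h Y X0 t = Lam t / alpha.
  exact: (iter_Gamma_cvg (Y := Y) alpha_gt0 h_gt0 t_ge0).
apply/eqP; rewrite eq_le; apply/andP; split.
  apply: ge_sup; first by exists 0; exists 0%N.
  move=> _ [k _ <-].
  exact: (iter_Gamma_le_solution (Y := Y) alpha_gt0 h_gt0 k Lam_sol t_ge0).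
rewrite ler_pdivrMr // mulrC.
apply: (Lam_min (fun s => alpha * iter_Gamma_lim alpha h Y X0 s)) => //.
exact: (iter_Gamma_lim_solution (Y := Y) alpha_gt0 h_gt0 indep atomless).
Qed.
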